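(* Let $A$ be an $n\times n$ Bott matrix. Then the seal space $Q^n_{\mathcal{F}_A}$ is homeomorphic to $M(A)=\mathbb{R}^n/\Gamma(A)$.
   Context: $\mathcal{C}^n=\{x\in\mathbb{R}^n: -\tfrac14\le x_i\le\tfrac14\}$; for $j\in\{\pm1,\dots,\pm n\}$, $\mathbf{F}(i)$, $\mathbf{F}(-i)$ ($1\le i\le n$) are the facets in $\{x_i=\tfrac14\}$, $\{x_i=-\tfrac14\}$. A binary matrix has entries in $\mathbb{Z}_2$; $A^i_k$ denotes the $(i,k)$ entry viewed as $0$ or $1$. A Bott matrix is a binary square matrix conjugate by a permutation matrix to a strictly upper triangular binary matrix (in particular it has zero diagonal). For a binary $n\times n$ matrix $A$ with zero diagonal: $\mathcal{F}_A$ is the facets-pairing structure pairing $\mathbf{F}(j)$ with $\mathbf{F}(-j)$ via $\tau^A_j:\mathbf{F}(j)\to\mathbf{F}(-j)$, $\tau^A_j(x)=y$ with $y_{|j|}=-x_{|j|}$ and $y_k=(-1)^{A^{|j|}_k}x_k$ for $k\ne|j|$. The seal space $Q^n_{\mathcal{F}_A}$ is the quotient of $\mathcal{C}^n$ by the equivalence relation generated by $x\sim\tau^A_j(x)$ ($x\in\mathbf{F}(j)$). $\Gamma(A)$ is the subgroup of $\mathrm{Isom}(\mathbb{R}^n)$ generated by $s_1,\dots,s_n$, where $s_i(x)=y$ with $y_i=x_i+\tfrac12$ and $y_k=(-1)^{A^i_k}x_k$ for $k\ne i$. *)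

From mathcomp Require Import all_boot all_fingroup.
From Stdlib Require Import Reals Relations.

Set Implicit Arguments.
Unset Strict Implicit.

(* A quotient of a type X (with a topology given by openX) by a relation E:
   points are equivalence classes, i.e. predicates of the form [x]_E. *)
Definition quot (X : Type) (E : X -> X -> Prop) : Type :=
  { S : X -> Prop | exists x : X, forall y, S y <-> E x y }.

Definition cls (X : Type) (E : X -> X -> Prop) (x : X) : quot E :=
  exist (fun S => exists x0 : X, forall y, S y <-> E x0 y) (E x)
        (ex_intro _ x (fun y => iff_refl (E x y))).

Definition quot_open (X : Type) (openX : (X -> Prop) -> Prop)
  (E : X -> X -> Prop) (W : quot E -> Prop) : Prop :=
  openX (fun x => W (cls E x)).
Arguments quot_open {X} openX E W.

Definition continuous_map (X Y : Type) (openX : (X -> Prop) -> Prop)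
  (openY : (Y -> Prop) -> Prop) (f : X -> Y) : Prop :=
  forall V : Y -> Prop, openY V -> openX (fun x => V (f x)).

Definition homeomorphic (X Y : Type) (openX : (X -> Prop) -> Prop)
  (openY : (Y -> Prop) -> Prop) : Prop :=
  exists (f : X -> Y) (g : Y -> X),
    (forall x, g (f x) = x) /\ (forall y, f (g y) = y) /\
    continuous_map openX openY f /\ continuous_map openY openX g.

Definition Rn (n : nat) : Type := 'I_n -> R.

(* Euclidean topology (the sup-norm balls generate the same topology). *)
Definition Rn_open (n : nat) (U : Rn n -> Prop) : Prop :=
  forall x, U x -> exists eps : R, (0 < eps)%R /\
    forall y : Rn n, (forall i, (Rabs (y i - x i) < eps)%R) -> U y.

Definition in_cube (n : nat) (x : Rn n) : Prop :=
  forall i, (-(1/4) <= x i <= 1/4)%R.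

Definition cube (n : nat) : Type := { x : Rn n | in_cube x }.

Definition cube_open (n : nat) (V : cube n -> Prop) : Prop :=
  exists U : Rn n -> Prop, Rn_open U /\ forall c : cube n, V c <-> U (proj1_sig c).

Definition bmatrix (n : nat) : Type := 'I_n -> 'I_n -> bool.

(* Conjugate by a permutation matrix to a strictly upper triangular matrix:
   there is a relabelling s of the indices such that the entry (s^-1 a, s^-1 b)
   is nonzero only if a < b, i.e. A i j = 1 implies s i < s j. *)
Definition is_Bott (n : nat) (A : bmatrix n) : Prop :=
  exists s : 'S_n, forall i j : 'I_n, A i j -> (s i < s j)%N.

Definition sgnb (b : bool) (x : R) : R := if b then (- x)%R else x.

(* tau^A_j for |j| = i (same formula for j = i and j = -i). *)
Definition tauA (n : nat) (A : bmatrix n) (i : 'I_n) (x : Rn n) : Rn n :=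
  fun k => if k == i then (- x k)%R else sgnb (A i k) (x k).

(* x ~ tau_j(x) for x in the facet F(j) (j = i: x_i = 1/4; j = -i: x_i = -1/4). *)
Definition seal_gen (n : nat) (A : bmatrix n) (c d : cube n) : Prop :=
  exists i : 'I_n,
    (proj1_sig c i = 1/4 \/ proj1_sig c i = -(1/4))%R /\
    proj1_sig d = tauA A i (proj1_sig c).

Definition seal_rel (n : nat) (A : bmatrix n) : relation (cube n) :=
  clos_refl_sym_trans (cube n) (seal_gen A).

Definition seal_space (n : nat) (A : bmatrix n) : Type := quot (seal_rel A).

Definition seal_open (n : nat) (A : bmatrix n) : (seal_space A -> Prop) -> Prop :=
  quot_open (@cube_open n) (seal_rel A).

Definition sA (n : nat) (A : bmatrix n) (i : 'I_n) (x : Rn n) : Rn n :=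
  fun k => if k == i then (x k + 1/2)%R else sgnb (A i k) (x k).

Definition sA_inv (n : nat) (A : bmatrix n) (i : 'I_n) (x : Rn n) : Rn n :=
  fun k => if k == i then (x k - 1/2)%R else sgnb (A i k) (x k).

Inductive GammaA (n : nat) (A : bmatrix n) : (Rn n -> Rn n) -> Prop :=
  | Gamma_id : GammaA A (fun x => x)
  | Gamma_s : forall g i, GammaA A g -> GammaA A (fun x => sA A i (g x))
  | Gamma_sinv : forall g i, GammaA A g -> GammaA A (fun x => sA_inv A i (g x)).

Definition orbit_rel (n : nat) (A : bmatrix n) (x y : Rn n) : Prop :=
  exists g, GammaA A g /\ y = g x.

Definition MA (n : nat) (A : bmatrix n) : Type := quot (orbit_rel A).

Definition MA_open (n : nat) (A : bmatrix n) : (MA A -> Prop) -> Prop :=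
  quot_open (@Rn_open n) (orbit_rel A).

From mathcomp Require Import all_boot all_fingroup.
From Stdlib Require Import Reals Relations Lra Lia ZArith.
From Stdlib Require Import FunctionalExtensionality PropExtensionality.
From Stdlib Require Import ProofIrrelevance ClassicalEpsilon Classical.

Set Implicit Arguments.
Unset Strict Implicit.
Open Scope R_scope.

(* Every element of Γ(A) has the form x ↦ Dx + t/2 with t integral and
   D = diag((-1)^(Σ_i t_i A_ik)); this needs the zero diagonal of A, which is
   all that the Bott condition is used for.  An element moving a cube point c
   into the cube therefore translates only coordinates in which c lies on a
   facet, each by a single generator, and peeling these generators off one at
   a time shows that c and its image are identified by the face pairings.  So
   the inclusion of the cube induces a bijection between the seal space and
   R^n/Γ(A); it is onto because every orbit meets the cube.  It is continuous
   by construction, and its inverse is continuous because the Γ(A)-saturation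
   of a pairing-saturated open subset of the cube is open: near a point of a
   facet, the generator crossing that facet carries the part of a small ball
   lying outside the cube back near the paired point. *)

Section Quotient.
Variables (X : Type) (E : X -> X -> Prop).

Lemma cls_eqP (E_equiv : equivalence X E) x y : cls E x = cls E y <-> E x y.
Proof.
have [E_refl E_trans E_sym] := E_equiv.
split=> [/(f_equal (fun q => sval q y)) /= -> | Exy]; first exact: E_refl.
apply: eq_sig_hprop => [S p q|]; first exact: proof_irrelevance.
apply: functional_extensionality => z; apply: propositional_extensionality.
by split=> Hz; [apply: E_trans (E_sym _ _ Exy) Hz | apply: E_trans Exy Hz].
Qed.

Lemma cls_surj (q : quot E) : exists x, q = cls E x.
Proof.
case: q => S [x Sx]; exists x.
apply: eq_sig_hprop => [T p q|]; first exact: proof_irrelevance.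
by apply: functional_extensionality => y; apply: propositional_extensionality.
Qed.

Definition quot_repr (q : quot E) : X :=
  sval (constructive_indefinite_description _ (cls_surj q)).

Lemma quot_reprK q : cls E (quot_repr q) = q.
Proof. by rewrite /quot_repr; case: constructive_indefinite_description. Qed.

End Quotient.

Section QuotientHomeomorphism.
Variables (X Y : Type) (openX : (X -> Prop) -> Prop) (openY : (Y -> Prop) -> Prop).
Variables (E : X -> X -> Prop) (F : Y -> Y -> Prop) (f : X -> Y).
Hypotheses (E_equiv : equivalence X E) (F_equiv : equivalence Y F).
Hypothesis f_cont : continuous_map openX openY f.
Hypothesis f_reflect : forall x x', E x x' <-> F (f x) (f x').
Hypothesis f_meets : forall y, exists x, F y (f x).
Hypothesis f_saturation_open : forall P, openX P ->
  (forall x x', E x x' -> P x -> P x') ->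
  openY (fun y => exists x, F y (f x) /\ P x).

Let lift (y : Y) : X := sval (constructive_indefinite_description _ (f_meets y)).
Let qf (q : quot E) : quot F := cls F (f (quot_repr q)).
Let qg (m : quot F) : quot E := cls E (lift (quot_repr m)).

Lemma lift_spec y : F y (f (lift y)).
Proof. exact: proj2_sig (constructive_indefinite_description _ (f_meets y)). Qed.

Lemma qf_cls x : qf (cls E x) = cls F (f x).
Proof. by apply/(cls_eqP F_equiv)/f_reflect/(cls_eqP E_equiv)/quot_reprK. Qed.

Lemma qg_cls y x : F y (f x) -> qg (cls F y) = cls E x.
Proof.
have [_ F_trans F_sym] := F_equiv.
move=> Fyx; apply/(cls_eqP E_equiv)/f_reflect.
have Fr : F (quot_repr (cls F y)) y by apply/(cls_eqP F_equiv)/quot_reprK.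
exact: F_trans (F_sym _ _ (lift_spec _)) (F_trans _ _ _ Fr Fyx).
Qed.

Lemma quot_homeomorphic : homeomorphic (quot_open openX E) (quot_open openY F).
Proof.
have [F_refl _ F_sym] := F_equiv.
exists qf, qg; split; [|split; [|split]].
- move=> q; have [x ->] := cls_surj q.
  by rewrite qf_cls; apply: qg_cls; apply: F_refl.
- move=> m; have [y ->] := cls_surj m; have [x Fyx] := f_meets y.
  by rewrite (qg_cls Fyx) qf_cls; apply/(cls_eqP F_equiv)/F_sym.
- move=> V hV; rewrite /quot_open.
  have -> : (fun x => V (qf (cls E x))) = (fun x => V (cls F (f x))).
    by apply: functional_extensionality => x; rewrite qf_cls.
  exact: f_cont hV.
- move=> W hW; rewrite /quot_open.
  have -> : (fun y => W (qg (cls F y))) =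
            (fun y => exists x, F y (f x) /\ W (cls E x)).
    apply: functional_extensionality => y; apply: propositional_extensionality.
    split; last by case=> x [Fyx]; rewrite (qg_cls Fyx).
    by have [x Fyx] := f_meets y; rewrite (qg_cls Fyx) => Wx; exists x.
  by apply: f_saturation_open => // x x' /(cls_eqP E_equiv) ->.
Qed.

End QuotientHomeomorphism.

Lemma sgnbK b x : sgnb b (sgnb b x) = x.
Proof. by case: b => /=; lra. Qed.

Lemma sgnb_sgnb a b x : sgnb a (sgnb b x) = sgnb (xorb b a) x.
Proof. by case: a; case: b => /=; lra. Qed.

Lemma sgnbB b x y : sgnb b x - sgnb b y = sgnb b (x - y).
Proof. by case: b => /=; lra. Qed.

Lemma Rabs_sgnb b x : Rabs (sgnb b x) = Rabs x.
Proof. by case: b => //=; apply: Rabs_Ropp. Qed.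

Lemma sgnb_between b a x : - a <= x <= a -> - a <= sgnb b x <= a.
Proof. by case: b => /=; lra. Qed.

Lemma facet_sign a : a = 1/4 \/ a = -(1/4) ->
  exists2 u, (u = 1 \/ u = -1)%Z & a = - IZR u / 4.
Proof. by case=> ->; [exists (-1)%Z | exists 1%Z]; auto; lra. Qed.

Lemma quarter_cases a : -(1/4) <= a <= 1/4 ->
  (exists2 u, (u = 1 \/ u = -1)%Z & a = - IZR u / 4) \/ -(1/4) < a < 1/4.
Proof.
move=> a_bd; case: (Req_dec a (1/4)) => [a1|a1]; first by left; apply: facet_sign; left.
case: (Req_dec a (-(1/4))) => [a2|a2]; first by left; apply: facet_sign; right.
by right; lra.
Qed.

Lemma shift_into_quarter u a y : (u = 1 \/ u = -1)%Z -> a = - IZR u / 4 ->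
  Rabs (y - a) < 1/4 -> 1/4 < Rabs y -> Rabs (y + IZR u / 2) <= 1/4.
Proof. by case=> -> ->; split_Rabs; lra. Qed.

Lemma Bott_diag n (A : bmatrix n) : is_Bott A -> forall i, A i i = false.
Proof. by case=> s sA i; apply/negbTE/negP => /sA; rewrite ltnn. Qed.

Lemma cube_inj n (c d : cube n) : sval c = sval d -> c = d.
Proof. by apply: eq_sig_hprop => x p q; apply: proof_irrelevance. Qed.

Section Gamma.
Variables (n : nat) (A : bmatrix n).

Definition shiftA (i : 'I_n) (u : Z) (x : Rn n) : Rn n :=
  fun k => if k == i then x k + IZR u / 2 else sgnb (A i k) (x k).

Lemma sA_shiftA i : sA A i = shiftA i 1.
Proof.
apply: functional_extensionality => x; apply: functional_extensionality => k.
by rewrite /sA /shiftA; case: eqP => _ //; lra.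
Qed.

Lemma sA_inv_shiftA i : sA_inv A i = shiftA i (-1).
Proof.
apply: functional_extensionality => x; apply: functional_extensionality => k.
by rewrite /sA_inv /shiftA; case: eqP => _ //; lra.
Qed.

Lemma shiftAK i u x : shiftA i (- u) (shiftA i u x) = x.
Proof.
apply: functional_extensionality => k; rewrite /shiftA.
by case: eqP => _; [rewrite opp_IZR; lra | apply: sgnbK].
Qed.

Lemma shiftA_dist i u x y k :
  Rabs (shiftA i u y k - shiftA i u x k) = Rabs (y k - x k).
Proof.
by rewrite /shiftA; case: eqP => _; [f_equal; lra | rewrite sgnbB Rabs_sgnb].
Qed.

Lemma Rabs_shiftA_neq i u x k : k != i -> Rabs (shiftA i u x k) = Rabs (x k).
Proof. by rewrite /shiftA => /negbTE ->; apply: Rabs_sgnb. Qed.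

Lemma tauA_shiftA i u x : x i = - IZR u / 4 -> tauA A i x = shiftA i u x.
Proof.
move=> xi; apply: functional_extensionality => k; rewrite /tauA /shiftA.
by case: eqP => [->|//]; rewrite xi; lra.
Qed.

Lemma in_cube_tauA i (c : Rn n) : in_cube c -> in_cube (tauA A i c).
Proof.
move=> c_cube k; rewrite /tauA; case: eqP => _; last exact: sgnb_between.
by have := c_cube k; lra.
Qed.

Lemma GammaA_comp g h : GammaA A g -> GammaA A h -> GammaA A (fun x => g (h x)).
Proof.
elim=> [|g' i _ IH|g' i _ IH] Gh //.
- exact: Gamma_s (IH Gh).
- exact: Gamma_sinv (IH Gh).
Qed.

Lemma GammaA_shiftA i u : (u = 1 \/ u = -1)%Z -> GammaA A (shiftA i u).
Proof.
case=> ->; [rewrite -sA_shiftA | rewrite -sA_inv_shiftA].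
- exact: Gamma_s i (Gamma_id A).
- exact: Gamma_sinv i (Gamma_id A).
Qed.

Lemma GammaA_inv g : GammaA A g -> exists2 h, GammaA A h & forall x, h (g x) = x.
Proof.
elim=> [|g' i _ [h Gh hK]|g' i _ [h Gh hK]].
- by exists (fun x => x) => //; apply: Gamma_id.
- exists (fun x => h (shiftA i (-1) x)) => [|x].
    by apply: GammaA_comp Gh (GammaA_shiftA _ _); right.
  by rewrite sA_shiftA (shiftAK i 1).
- exists (fun x => h (shiftA i 1 x)) => [|x].
    by apply: GammaA_comp Gh (GammaA_shiftA _ _); left.
  by rewrite sA_inv_shiftA (shiftAK i (-1)).
Qed.

Lemma orbit_rel_equiv : equivalence (Rn n) (orbit_rel A).
Proof.
split.
- by move=> x; exists (fun x => x); split => //; apply: Gamma_id.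
- move=> x y z [g [Gg ->]] [h [Gh ->]].
  by exists (fun x => h (g x)); split => //; apply: GammaA_comp.
- move=> x y [g [Gg ->]]; have [h Gh hK] := GammaA_inv Gg.
  by exists h; rewrite hK.
Qed.

Lemma GammaA_dist g : GammaA A g ->
  forall x y k, Rabs (g y k - g x k) = Rabs (y k - x k).
Proof.
elim=> [|g' i _ IH|g' i _ IH] x y k //.
- by rewrite sA_shiftA shiftA_dist IH.
- by rewrite sA_inv_shiftA shiftA_dist IH.
Qed.

End Gamma.

Lemma seal_rel_orbit n (A : bmatrix n) (c d : cube n) :
  seal_rel A c d -> orbit_rel A (sval c) (sval d).
Proof.
have [O_refl O_trans O_sym] := orbit_rel_equiv A.
elim=> [{}c {}d [i [/facet_sign [u u1 ci] ->]]|{}c|{}c {}d _|{}c d' {}d _ cd' _ d'd].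
- by exists (shiftA A i u); rewrite (tauA_shiftA _ ci); split=> //; apply: GammaA_shiftA.
- exact: O_refl.
- exact: O_sym.
- exact: O_trans cd' d'd.
Qed.

Section AffineNormalForm.
Variables (n : nat) (A : bmatrix n).
Hypothesis A_diag : forall i, A i i = false.

(* [affine t] is the element of Γ(A) with translation part t/2: its linear part
   is the sign change diag((-1)^(Σ_i t_i A_ik)). *)
Definition linear_sign (t : 'I_n -> Z) (k : 'I_n) : bool :=
  odd (\sum_(i < n) (A i k && Z.odd (t i) : nat)).

Definition affine (t : 'I_n -> Z) (x : Rn n) : Rn n :=
  fun k => sgnb (linear_sign t k) (x k) + IZR (t k) / 2.

Definition shift_transl (i : 'I_n) (u : Z) (t : 'I_n -> Z) : 'I_n -> Z :=
  fun m => if m == i then (t i + u)%Z else if A i m then (- t m)%Z else t m.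

Lemma affine0 x : affine (fun=> 0%Z) x = x.
Proof.
apply: functional_extensionality => k; rewrite /affine /linear_sign big1 /=.
  by lra.
by move=> i _; rewrite andbF.
Qed.

Lemma linear_sign_shift i u t k : Z.odd u ->
  linear_sign (shift_transl i u t) k = xorb (linear_sign t k) (A i k).
Proof.
move=> odd_u; rewrite /linear_sign (bigD1 i) //= [in RHS](bigD1 i) //=.
rewrite (eq_bigr (fun j => A j k && Z.odd (t j) : nat)) => [|j /negbTE ji]; last first.
  by rewrite /shift_transl ji; case: (A i j); rewrite ?Z.odd_opp.
rewrite /shift_transl eqxx Z.odd_add odd_u !oddD.
by move: (odd (\sum_(_ < n | _) _)); case: (A i k); case: (Z.odd (t i)); case.
Qed.

Lemma shiftA_affine i u t x : Z.odd u ->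
  shiftA A i u (affine t x) = affine (shift_transl i u t) x.
Proof.
move=> odd_u; apply: functional_extensionality => k.
rewrite /shiftA /affine linear_sign_shift // /shift_transl.
case: eqP => [->|_]; first by rewrite A_diag Bool.xorb_false_r plus_IZR; lra.
by rewrite -sgnb_sgnb; case: (A i k) => /=; rewrite ?opp_IZR; lra.
Qed.

Lemma GammaA_affine g : GammaA A g -> exists t, forall x, g x = affine t x.
Proof.
elim=> [|g' i _ [t g't]|g' i _ [t g't]].
- by exists (fun=> 0%Z) => x; rewrite affine0.
- by exists (shift_transl i 1 t) => x; rewrite -shiftA_affine // -g't sA_shiftA.
- by exists (shift_transl i (-1) t) => x; rewrite -shiftA_affine // -g't sA_inv_shiftA.
Qed.

Lemma affine_coord_cube t (c : Rn n) k : in_cube c -> in_cube (affine t c) ->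
  t k = 0%Z \/ (t k = 1 \/ t k = -1)%Z /\ affine t c k = IZR (t k) / 4.
Proof.
move=> /(_ k) /(sgnb_between (linear_sign t k)) + /(_ k).
rewrite /affine; move: (sgnb _ _) => s s_bd d_bd.
have /le_IZR tk_ge : IZR (-1) <= IZR (t k) by lra.
have /le_IZR tk_le : IZR (t k) <= IZR 1 by lra.
have [->|[]] : (t k = 0 \/ t k = 1 \/ t k = -1)%Z by lia.
- by left.
- by move=> tk; rewrite tk in d_bd *; right; split; [left | lra].
- by move=> tk; rewrite tk in d_bd *; right; split; [right | lra].
Qed.

Definition transl_size (t : 'I_n -> Z) : nat := \sum_(k < n) Z.abs_nat (t k).

Lemma transl_size_shift t k : t k <> 0%Z ->
  (transl_size (shift_transl k (- t k) t) < transl_size t)%nat.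
Proof.
move=> tk; rewrite /transl_size [X in (_ < X)%nat](bigD1 k) //.
rewrite [X in (X < _)%nat](bigD1 k) //=.
rewrite /shift_transl eqxx Z.add_opp_diag_r add0n.
rewrite (eq_bigr (fun m => Z.abs_nat (t m))) => [|m /negbTE mk]; last first.
  by rewrite mk; case: (A k m) => //; case: (t m).
by rewrite -[X in (X < _)%nat]add0n ltn_add2r lt0n; apply/eqP; lia.
Qed.

Lemma seal_rel_affine t (c d : cube n) :
  sval d = affine t (sval c) -> seal_rel A c d.
Proof.
move: {2}(transl_size t) (erefl (transl_size t)) => N.
elim/ltn_ind: N t d => N IH t d tN dt.
have [[k tk]|t0] := classic (exists k, t k <> 0%Z); last first.
  have t_eq0 : t = fun=> 0%Z.
    by apply: functional_extensionality => k; apply: NNPP => tk; apply: t0; exists k.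
  by rewrite t_eq0 affine0 in dt; rewrite (cube_inj dt); apply: rst_refl.
have d_cube : in_cube (affine t (sval c)) by rewrite -dt; apply: proj2_sig.
have [//|[tk1 dk]] := affine_coord_cube k (proj2_sig c) d_cube.
pose d' : cube n := exist _ (tauA A k (sval d)) (in_cube_tauA A k (proj2_sig d)).
have d'_aff : sval d' = affine (shift_transl k (- t k) t) (sval c).
  rewrite /= (tauA_shiftA A (u := (- t k)%Z)); last by rewrite dt dk opp_IZR; lra.
  by rewrite dt shiftA_affine // Z.odd_opp; case: tk1 => ->.
have cd' : seal_rel A c d'.
  by apply: (IH _ _ _ _ (erefl _) d'_aff); rewrite -tN; apply: transl_size_shift.
apply: rst_trans cd' _; apply: rst_sym; apply: rst_step; exists k; split => //.
by rewrite dt dk; case: tk1 => ->; [left | right]; lra.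
Qed.

Lemma orbit_seal_rel (c d : cube n) :
  orbit_rel A (sval c) (sval d) -> seal_rel A c d.
Proof.
by case=> g [/GammaA_affine [t gt] dg]; apply: (seal_rel_affine (t := t)); rewrite dg gt.
Qed.

End AffineNormalForm.

Section CubeMeetsOrbits.
Variables (n : nat) (A : bmatrix n).

Lemma shift_coord i x (q : Z) : exists g, [/\ GammaA A g,
  g x i = x i + IZR q / 2 & forall k, k != i -> Rabs (g x k) = Rabs (x k)].
Proof.
pose shifts q := exists g, [/\ GammaA A g,
  g x i = x i + IZR q / 2 & forall k, k != i -> Rabs (g x k) = Rabs (x k)].
have step u q' : (u = 1 \/ u = -1)%Z -> shifts q' -> shifts (q' + u)%Z.
  move=> u1 [g [Gg gi g_other]]; exists (fun y => shiftA A i u (g y)); split.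
  - exact: GammaA_comp (GammaA_shiftA A i u1) Gg.
  - by rewrite /shiftA eqxx gi plus_IZR; lra.
  - by move=> k ki; rewrite Rabs_shiftA_neq // g_other.
change (shifts q); elim/Z.peano_ind: q => [|q|q]; last 2 first.
- by apply: step; left.
- by apply: step; right.
by exists (fun y => y); split => //; [apply: Gamma_id | lra].
Qed.

Lemma fix_coord i x : exists g, [/\ GammaA A g,
  Rabs (g x i) <= 1/4 & forall k, k != i -> Rabs (g x k) = Rabs (x k)].
Proof.
have [up_gt up_le] := archimed (2 * x i - 1/2).
have [g [Gg gi g_other]] := shift_coord i x (- up (2 * x i - 1/2)).
by exists g; split => //; rewrite gi opp_IZR; apply: Rabs_le; lra.
Qed.

Lemma fix_coords (l : seq 'I_n) x : exists2 g, GammaA A g &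
  forall k, k \in l \/ Rabs (x k) <= 1/4 -> Rabs (g x k) <= 1/4.
Proof.
elim: l x => [|i l IH] x; first by exists (fun y => y) => [|k [] //]; apply: Gamma_id.
have [h [Gh hi h_other]] := fix_coord i x.
have [g Gg g_fixes] := IH (h x).
exists (fun y => g (h y)) => [|k kx]; first exact: GammaA_comp.
apply: g_fixes; have [->|ki] := eqVneq k i; first by right.
rewrite h_other //; case: kx => [|]; last by right.
by rewrite in_cons (negbTE ki); left.
Qed.

Lemma orbit_meets_cube x : exists c : cube n, orbit_rel A x (sval c).
Proof.
have [g Gg g_fixes] := fix_coords (enum 'I_n) x.
have gx_cube : in_cube (g x).
  move=> k; have : Rabs (g x k) <= 1/4 by apply: g_fixes; left; rewrite mem_enum.
  by split_Rabs; lra.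
by exists (exist _ (g x) gx_cube); exists g.
Qed.

End CubeMeetsOrbits.

Section SaturationOpen.
Variables (n : nat) (A : bmatrix n) (P : cube n -> Prop).
Hypothesis P_open : cube_open P.
Hypothesis P_sat : forall c d, seal_rel A c d -> P c -> P d.

Definition orbit_saturation (y : Rn n) : Prop :=
  exists c : cube n, orbit_rel A y (sval c) /\ P c.

Lemma orbit_saturation_orbit y y' :
  orbit_rel A y y' -> orbit_saturation y' -> orbit_saturation y.
Proof.
have [_ O_trans _] := orbit_rel_equiv A.
by move=> yy' [c [y'c Pc]]; exists c; split => //; apply: O_trans yy' y'c.
Qed.

(* Coordinates outside [l] are assumed to lie within the cube's range; the
   induction on [l] below releases them one at a time. *)
Definition saturation_nbhd (l : seq 'I_n) (c : cube n) (eps : R) : Prop :=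
  forall y, (forall k, Rabs (y k - sval c k) < eps) ->
  (forall k, k \notin l -> Rabs (y k) <= 1/4) -> orbit_saturation y.

Lemma saturation_nbhd_cons_escape i l (c : cube n) :
  (forall c, P c -> exists2 eps, 0 < eps & saturation_nbhd l c eps) ->
  P c -> exists2 eps, 0 < eps & forall y,
    (forall k, Rabs (y k - sval c k) < eps) ->
    (forall k, k \notin i :: l -> Rabs (y k) <= 1/4) ->
    1/4 < Rabs (y i) -> orbit_saturation y.
Proof.
move=> IH Pc; have [[u u1 ci]|ci] := quarter_cases (proj2_sig c i); last first.
  exists (Rmin (1/4 - sval c i) (sval c i + 1/4)); first by apply: Rmin_glb_lt; lra.
  move=> y /(_ i) /Rlt_le_trans near _ yi.
  have := near _ (Rmin_l _ _); have := near _ (Rmin_r _ _).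
  by move: yi; split_Rabs; lra.
pose c' : cube n := exist _ (tauA A i (sval c)) (in_cube_tauA A i (proj2_sig c)).
have Pc' : P c'.
  apply: P_sat Pc; apply: rst_step; exists i; split => //.
  by rewrite ci; case: u1 => ->; [right | left]; lra.
have [eps eps_gt0 near'] := IH c' Pc'.
exists (Rmin eps (1/4)) => [|y near yl yi]; first by apply: Rmin_glb_lt; lra.
apply: (orbit_saturation_orbit (y' := shiftA A i u y)).
  by exists (shiftA A i u); split => //; apply: GammaA_shiftA.
apply: near' => [k|k kl].
  rewrite /= (tauA_shiftA _ ci) shiftA_dist.
  exact: Rlt_le_trans (near k) (Rmin_l _ _).
have [->|ki] := eqVneq k i.
  rewrite /shiftA eqxx; apply: shift_into_quarter u1 ci _ yi.
  exact: Rlt_le_trans (near i) (Rmin_r _ _).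
by rewrite Rabs_shiftA_neq //; apply: yl; rewrite in_cons negb_or ki.
Qed.

Lemma saturation_nbhd_cube (l : seq 'I_n) (c : cube n) :
  P c -> exists2 eps, 0 < eps & saturation_nbhd l c eps.
Proof.
elim: l c => [|i l IH] c Pc.
  have [U [U_open PU]] := P_open.
  have [eps [eps_gt0 ball_U]] := U_open _ (proj1 (PU c) Pc).
  exists eps => // y near y_small.
  have y_cube : in_cube y by move=> k; have := y_small k isT; split_Rabs; lra.
  exists (exist _ y y_cube); split; first exact: (equiv_refl _ _ (orbit_rel_equiv A)).
  by apply/PU; apply: ball_U.
have [eps1 eps1_gt0 near1] := IH c Pc.
have [eps2 eps2_gt0 escape] := saturation_nbhd_cons_escape i IH Pc.
exists (Rmin eps1 eps2) => [|y near yl]; first exact: Rmin_glb_lt.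
have [yi|yi] := Rle_lt_dec (Rabs (y i)) (1/4); last first.
  by apply: escape yl yi => k; apply: Rlt_le_trans (near k) (Rmin_r _ _).
apply: near1 => [k|k kl]; first exact: Rlt_le_trans (near k) (Rmin_l _ _).
have [->//|ki] := eqVneq k i.
by apply: yl; rewrite in_cons negb_or ki.
Qed.

Lemma orbit_saturation_open : Rn_open orbit_saturation.
Proof.
move=> y [c [[g [Gg cg]] Pc]].
have [eps eps_gt0 near] := saturation_nbhd_cube (enum 'I_n) Pc.
exists eps; split => // y' y'y.
apply: (orbit_saturation_orbit (y' := g y')); first by exists g.
by apply: near => [k|k]; [rewrite cg (GammaA_dist Gg) | rewrite mem_enum].
Qed.

End SaturationOpen.

Theorem mainTheorem10 (n : nat) (A : bmatrix n) (hA : is_Bott A) :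
  homeomorphic (@seal_open n A) (@MA_open n A).
Proof.
apply: (quot_homeomorphic (f := sval)).
- exact: clos_rst_is_equiv.
- exact: orbit_rel_equiv.
- by move=> U U_open; exists U.
- move=> c d; split; first exact: seal_rel_orbit.
  exact: orbit_seal_rel (Bott_diag hA) c d.
- exact: orbit_meets_cube.
- by move=> P P_open P_sat; apply: orbit_saturation_open.
Qed.
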